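(* Let $V$ be finite, $\omega:V\to\mathbb{R}_{>0}$, $W:=\sum_{i\in V}\omega_i$, and vectors $\{v_i\}_{i\in V}$ with $\sum_{\{i,j\}\subseteq V,i\ne j}\omega_i\omega_j\|v_i-v_j\|^2=1$. Suppose $i_0\in V$ and let $L:=\{j\in V:\|v_{i_0}-v_j\|^2\le\frac{1}{8W^2}\}$ (nonempty as $i_0\in L$). For $j\in V$ let $\Delta(j,L):=\min_{i\in L}\|v_i-v_j\|^2$. Then $\sum_{j\in V\setminus L}\omega_j\Delta(j,L)\ge\frac{1}{8W}$. *)

From HB Require Import structures.
From mathcomp Require Import all_boot all_order all_algebra.
Set Implicit Arguments. Unset Strict Implicit. Unset Printing Implicit Defensive.
Import Order.TTheory GRing.Theory Num.Theory.
Local Open Scope ring_scope.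

Definition sqdist (R : realFieldType) (d : nat) (x y : 'rV[R]_d) : R :=
  \sum_(k < d) (x 0 k - y 0 k) ^+ 2.

(* sum over unordered pairs {i,j}, i <> j, of w_i w_j ||v_i - v_j||^2,
   written as half of the sum over ordered pairs (i,j) with i <> j *)
Definition pair_energy (R : realFieldType) (d : nat) (V : finType)
  (w : V -> R) (v : V -> 'rV[R]_d) : R :=
  2^-1 * \sum_(i : V) \sum_(j : V | i != j) w i * w j * sqdist (v i) (v j).

Definition Lset (R : realFieldType) (d : nat) (V : finType)
  (W : R) (v : V -> 'rV[R]_d) (i0 : V) : {set V} :=
  [set j | sqdist (v i0) (v j) <= (8 * W ^+ 2)^-1].

(* Delta(j, L) := min_{i in L} ||v_i - v_j||^2 ; the fold is seeded with the
   value at i0, which is an element of L, so this is exactly the minimum over L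
   whenever i0 \in L. *)
Definition Delta (R : realFieldType) (d : nat) (V : finType)
  (v : V -> 'rV[R]_d) (i0 : V) (L : {set V}) (j : V) : R :=
  \big[Num.min/sqdist (v i0) (v j)]_(i in L) sqdist (v i) (v j).

From HB Require Import structures.
From mathcomp Require Import all_boot all_order all_algebra.
From mathcomp Require Import ring lra.
Set Implicit Arguments. Unset Strict Implicit. Unset Printing Implicit Defensive.
Import Order.TTheory GRing.Theory Num.Theory.
Local Open Scope ring_scope.

(* Every point v_j has a nearest point p_j of L, at squared distance
   Delta(j, L), and every point of L lies within squared distance
   r = 1/(8 W^2) of v_i0.  The path v_i, p_i, v_i0, p_j, v_j and
   (a + b + c + e)^2 <= 4 (a^2 + b^2 + c^2 + e^2) give
   ||v_i - v_j||^2 <= 4 (Delta(i, L) + r) + 4 (Delta(j, L) + r).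
   Summing against w_i w_j bounds the energy 1 by
   4 W sum_j w_j Delta(j, L) + 4 r W^2 = 4 W sum_j w_j Delta(j, L) + 1/2,
   and Delta vanishes on L. *)

Lemma sqrD4_le (R : realDomainType) (a b c e : R) :
  (a + b + c + e) ^+ 2 <= 4 * (a ^+ 2 + b ^+ 2 + c ^+ 2 + e ^+ 2).
Proof.
rewrite -subr_ge0.
have -> : 4 * (a ^+ 2 + b ^+ 2 + c ^+ 2 + e ^+ 2) - (a + b + c + e) ^+ 2 =
  (a - b) ^+ 2 + (a - c) ^+ 2 + (a - e) ^+ 2 + (b - c) ^+ 2 + (b - e) ^+ 2
  + (c - e) ^+ 2 by ring.
by rewrite !addr_ge0 ?sqr_ge0.
Qed.

Section SquaredDistance.
Variables (R : realFieldType) (d : nat).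
Implicit Types x y a b c : 'rV[R]_d.

Lemma sqdist_sym x y : sqdist x y = sqdist y x.
Proof. by apply: eq_bigr => k _; rewrite -sqrrN opprB. Qed.

Lemma sqdist_ge0 x y : 0 <= sqdist x y.
Proof. by apply: sumr_ge0 => k _; rewrite sqr_ge0. Qed.

Lemma sqdistxx x : sqdist x x = 0.
Proof. by apply: big1 => k _; rewrite subrr expr0n. Qed.

Lemma sqdist_le4 x a b c y :
  sqdist x y <= 4 * (sqdist x a + sqdist a b + sqdist b c + sqdist c y).
Proof.
rewrite /sqdist -!big_split mulr_sumr; apply: ler_sum => k _ /=.
have -> : x 0 k - y 0 k =
  (x 0 k - a 0 k) + (a 0 k - b 0 k) + (b 0 k - c 0 k) + (c 0 k - y 0 k) by ring.
exact: sqrD4_le.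
Qed.

Lemma sqdist_le_through_ball c r a b x y :
  sqdist c a <= r -> sqdist c b <= r ->
  sqdist x y <= 4 * (sqdist a x + r) + 4 * (sqdist b y + r).
Proof.
move=> ca_le cb_le; apply: le_trans (sqdist_le4 x a c b y) _.
by rewrite (sqdist_sym a x) (sqdist_sym a c); lra.
Qed.

End SquaredDistance.

Section PairEnergy.
Variables (R : realFieldType) (d : nat) (V : finType).
Variables (w : V -> R) (v : V -> 'rV[R]_d).

Lemma pair_energyE :
  pair_energy w v = 2^-1 * \sum_i \sum_j w i * w j * sqdist (v i) (v j).
Proof.
congr (_ * _); apply: eq_bigr => i _.
by rewrite [RHS](bigD1 i) //= sqdistxx mulr0 add0r; apply: eq_bigl => j; rewrite eq_sym.
Qed.

Lemma pair_energy_le (f : V -> R) :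
  (forall i, 0 <= w i) -> (forall i j, sqdist (v i) (v j) <= f i + f j) ->
  pair_energy w v <= (\sum_i w i) * \sum_i w i * f i.
Proof.
move=> w_ge0 split_le; set F := \sum_i w i * f i.
have sum_fi : \sum_i \sum_j w i * w j * f i = (\sum_i w i) * F.
  rewrite mulrC mulr_suml; apply: eq_bigr => i _.
  by rewrite mulr_sumr; apply: eq_bigr => j _; ring.
have sum_fj : \sum_i \sum_j w i * w j * f j = (\sum_i w i) * F.
  by rewrite exchange_big -sum_fi; do 2!apply: eq_bigr => ? _; ring.
have sum_fij : \sum_i \sum_j w i * w j * (f i + f j) = 2 * ((\sum_i w i) * F).
  under eq_bigr => i _ do (under eq_bigr => j _ do rewrite mulrDr; rewrite big_split).
  by rewrite big_split /= sum_fi sum_fj mulr2n mulrDl mul1r.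
have -> : (\sum_i w i) * F = 2^-1 * \sum_i \sum_j w i * w j * (f i + f j).
  by rewrite sum_fij mulKf ?pnatr_eq0.
rewrite pair_energyE ler_pM2l ?invr_gt0 //; apply: ler_sum => i _.
by apply: ler_sum => j _; rewrite ler_wpM2l ?mulr_ge0.
Qed.

End PairEnergy.

Section NearestPoint.
Variables (R : realFieldType) (d : nat) (V : finType).
Variables (v : V -> 'rV[R]_d) (i0 : V) (L : {set V}).

Lemma Delta_eq0 j : j \in L -> Delta v i0 L j = 0.
Proof.
move=> jL; apply: le_anti; apply/andP; split.
  by rewrite -(sqdistxx (v j)) /Delta; apply: bigmin_le_cond.
by apply/bigmin_geP; split=> [|i _]; apply: sqdist_ge0.
Qed.

Lemma sum_setC_Delta (w : V -> R) :
  \sum_(j in ~: L) w j * Delta v i0 L j = \sum_j w j * Delta v i0 L j.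
Proof.
rewrite [RHS](bigID [in L]) /= [X in X + _]big1 ?add0r => [|j jL]; last first.
  by rewrite Delta_eq0 ?mulr0.
by apply: eq_bigl => j; rewrite inE.
Qed.

Hypothesis i0L : i0 \in L.

Lemma Delta_nearest j : exists2 p, p \in L & sqdist (v p) (v j) <= Delta v i0 L j.
Proof.
case: (arg_minP (fun i => sqdist (v i) (v j)) i0L) => p pL p_min.
by exists p => //; apply/bigmin_geP; split=> [|i iL]; apply: p_min.
Qed.

End NearestPoint.

Theorem mainTheorem11 (R : realFieldType) (d : nat) (V : finType)
  (w : V -> R) (v : V -> 'rV[R]_d) (i0 : V)
  (hw : forall i, 0 < w i)
  (hE : pair_energy w v = 1) :
  let W := \sum_(i : V) w i in
  let L := Lset W v i0 in
  (8 * W)^-1 <= \sum_(j in ~: L) w j * Delta v i0 L j.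
Proof.
cbv zeta; set W := \sum_i w i; set L := Lset W v i0.
set r := (8 * W ^+ 2)^-1; set D := Delta v i0 L.
have W_gt0 : 0 < W by rewrite /W (bigD1 i0) //= ltr_wpDr ?sumr_ge0 // => i _; apply: ltW.
have i0L : i0 \in L by rewrite inE sqdistxx invr_ge0 mulr_ge0 ?ltW ?exprn_gt0.
have split_le i j : sqdist (v i) (v j) <= 4 * (D i + r) + 4 * (D j + r).
  have [p + pi_le] := Delta_nearest v i0L i; have [q + qj_le] := Delta_nearest v i0L j.
  rewrite /D !inE -/r => i0q_le i0p_le.
  by apply: le_trans (sqdist_le_through_ball _ _ i0p_le i0q_le) _; lra.
have := pair_energy_le (fun i => ltW (hw i)) split_le.
have -> : \sum_i w i * (4 * (D i + r)) = 4 * \sum_i w i * D i + 4 * r * W.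
  by rewrite /W !mulr_sumr -big_split; apply: eq_bigr => i _ /=; ring.
have rW2 : r * W ^+ 2 = 8^-1 by rewrite /r invfM divfK // expf_neq0 ?gt_eqF.
rewrite hE sum_setC_Delta -/W -/D => energy_le.
by rewrite invfM ler_pdivrMr //; lra.
Qed.
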